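(* Let $S$ be a countable discrete inverse semigroup with identity having a minimal projection $e_0\in E(S)$, and let $\alpha\colon S\to\mathcal I(X)$ be a representation. The following are equivalent: (1) $X$ is $S$-amenable; (2) $D_{e_0}$ is not $S$-paradoxical; (3) $D_{e_0}$ is $S$-domain F\o lner.
   Context: Inverse semigroup: each $s$ has a unique $s^*$ with $ss^*s=s$, $s^*ss^*=s^*$; $E(S)=\{s^*s\}$ is the set of idempotents, ordered by $e\le f\iff ef=e$; $e_0$ is minimal if $f\le e_0$, $f\in E(S)$, implies $f=e_0$. A representation is a unital homomorphism $\alpha\colon S\to\mathcal I(X)$ into partial bijections of $X$; $D_{s^*s}$ is the domain of $\alpha_s$, and $D_e$ the domain of $\alpha_e$. $X$ is $S$-amenable if there is a finitely additive $\mu\colon\mathcal P(X)\to[0,\infty]$ with $\mu(X)=1$, $\mu(B)=\mu(\alpha_s(B))$ for $B\subseteq D_{s^*s}$, and $\mu(B)=\mu(B\cap D_{t^*t})$ for all $t\in S$, $B\subseteq X$. $A\subseteq X$ is $S$-paradoxical if there are $A_i,B_j\subseteq X$, $s_i,t_j\in S$ with $A_i\subseteq D_{s_i^*s_i}$, $B_j\subseteq D_{t_j^*t_j}$, $A=\bigsqcup_{i=1}^n\alpha_{s_i}(A_i)=\bigsqcup_{j=1}^m\alpha_{t_j}(B_j)\supseteq A_1\sqcup\dots\sqcup A_n\sqcup B_1\sqcup\dots\sqcup B_m$. $A$ is $S$-domain F\o lner if there are finite non-empty $F_n\subseteq A$ with $|\alpha_s(F_n\cap D_{s^*s})\setminus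 F_n|/|F_n|\to0$ for all $s\in S$. *)

From Stdlib Require Import Reals List.
Import ListNotations.
Open Scope R_scope.
Set Implicit Arguments.

Record InvSemigroup := {
  carrier :> Type;
  smul : carrier -> carrier -> carrier;
  sone : carrier;
  sstar : carrier -> carrier;
  smul_assoc : forall a b c, smul a (smul b c) = smul (smul a b) c;
  smul_1l : forall a, smul sone a = a;
  smul_1r : forall a, smul a sone = a;
  sstar_l : forall s, smul (smul s (sstar s)) s = s;
  sstar_r : forall s, smul (smul (sstar s) s) (sstar s) = sstar s;
  sstar_uniq : forall s t, smul (smul s t) s = s -> smul (smul t s) t = t -> t = sstar s
}.

Arguments smul {_}.
Arguments sone {_}.
Arguments sstar {_}.

Definition is_proj {S : InvSemigroup} (e : S) : Prop :=
  exists s : S, e = smul (sstar s) s.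

Definition proj_le {S : InvSemigroup} (e f : S) : Prop := smul e f = e.

Definition minimal_proj {S : InvSemigroup} (e0 : S) : Prop :=
  is_proj e0 /\ forall f : S, is_proj f -> proj_le f e0 -> f = e0.

(** Countable (S is discrete, so no topology is needed). *)
Definition countable (T : Type) : Prop :=
  exists f : T -> nat, forall a b, f a = f b -> a = b.

(** Representation alpha : S -> I(X), unital homomorphism into the partial
    bijections of X.  alpha_s has domain rdom s and acts by ract s. *)
Record Rep (S : InvSemigroup) (X : Type) := {
  rdom : S -> X -> Prop;
  ract : S -> X -> X;
  ract_inj : forall s x y, rdom s x -> rdom s y -> ract s x = ract s y -> x = y;
  rdom_mul : forall s t x, rdom (smul s t) x <-> (rdom t x /\ rdom s (ract t x));
  ract_mul : forall s t x, rdom (smul s t) x -> ract (smul s t) x = ract s (ract t x);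
  rdom_one : forall x, rdom sone x;
  ract_one : forall x, ract sone x = x
}.

Arguments rdom {_ _}.
Arguments ract {_ _}.

Section Sets.
Variables (S : InvSemigroup) (X : Type) (al : Rep S X).

Definition subset (A B : X -> Prop) : Prop := forall x, A x -> B x.
Definition disjoint (A B : X -> Prop) : Prop := forall x, A x -> B x -> False.

Definition D (e : S) : X -> Prop := rdom al e.

Definition img (s : S) (B : X -> Prop) : X -> Prop :=
  fun y => exists x, B x /\ rdom al s x /\ y = ract al s x.

Definition disj_union_img (A : X -> Prop) (n : nat) (s : nat -> S)
  (Ai : nat -> X -> Prop) : Prop :=
  (forall x, A x <-> exists i, (i < n)%nat /\ img (s i) (Ai i) x) /\
  (forall i j, (i < n)%nat -> (j < n)%nat -> i <> j ->
     disjoint (img (s i) (Ai i)) (img (s j) (Ai j))).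

Definition paradoxical (A : X -> Prop) : Prop :=
  exists (n m : nat) (Ai Bj : nat -> X -> Prop) (s t : nat -> S),
    (forall i, (i < n)%nat -> subset (Ai i) (D (smul (sstar (s i)) (s i)))) /\
    (forall j, (j < m)%nat -> subset (Bj j) (D (smul (sstar (t j)) (t j)))) /\
    disj_union_img A n s Ai /\
    disj_union_img A m t Bj /\
    (forall i, (i < n)%nat -> subset (Ai i) A) /\
    (forall j, (j < m)%nat -> subset (Bj j) A) /\
    (forall i i', (i < n)%nat -> (i' < n)%nat -> i <> i' -> disjoint (Ai i) (Ai i')) /\
    (forall j j', (j < m)%nat -> (j' < m)%nat -> j <> j' -> disjoint (Bj j) (Bj j')) /\
    (forall i j, (i < n)%nat -> (j < m)%nat -> disjoint (Ai i) (Bj j)).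

Definition card_is (P : X -> Prop) (k : nat) : Prop :=
  exists l : list X, NoDup l /\ length l = k /\ forall x, In x l <-> P x.

Definition domain_Folner (A : X -> Prop) : Prop :=
  exists F : nat -> list X,
    (forall n, NoDup (F n)) /\ (forall n, F n <> []) /\
    (forall n x, In x (F n) -> A x) /\
    forall s : S, exists c : nat -> nat,
      (forall n, card_is (fun y => img s (fun x => In x (F n) /\ D (smul (sstar s) s) x) y
                                   /\ ~ In y (F n)) (c n)) /\
      Un_cv (fun n => INR (c n) / INR (length (F n))) 0.

End Sets.

Inductive ereal := Fin (r : R) | PInf.
Definition eadd (a b : ereal) : ereal :=
  match a, b with Fin x, Fin y => Fin (x + y) | _, _ => PInf end.
Definition enonneg (a : ereal) : Prop :=
  match a with Fin x => 0 <= x | PInf => True end.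

Definition amenable {S : InvSemigroup} {X : Type} (al : Rep S X) : Prop :=
  exists mu : (X -> Prop) -> ereal,
    (forall B, enonneg (mu B)) /\
    (forall A B, disjoint A B -> mu (fun x => A x \/ B x) = eadd (mu A) (mu B)) /\
    mu (fun _ => True) = Fin 1 /\
    (forall (s : S) (B : X -> Prop), subset B (D al (smul (sstar s) s)) ->
        mu B = mu (img al s B)) /\
    (forall (t : S) (B : X -> Prop), mu B = mu (fun x => B x /\ D al (smul (sstar t) t) x)).

(* Minimality of e0 forces e0 <= s^* e0 s for every s, so every alpha_s is
   defined on D_{e0}, maps it injectively into itself, and is inverted there
   by alpha_{s^*}.
   (1) => (2): an invariant mean gives D_{e0} mass 1, while the two halves of
   a paradoxical decomposition each already have mass 1.
   (3) => (1): the densities |B /\ F_n| / |F_n|, taken to the limit along an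
   ultrafilter on nat, form an invariant mean; the Folner condition controls
   the error made by translating B.
   (2) => (3): if no finite part of D_{e0} is almost invariant under a finite
   K, then K expands every finite part by a fixed proportion, so the balls of
   some radius p at least double every finite part.  Hall's marriage theorem,
   extended to infinite graphs by compactness, then embeds two disjoint copies
   of D_{e0} into D_{e0} by finitely many words, which is a paradoxical
   decomposition.  Countability of S turns almost invariant sets for finite
   K into a Folner sequence. *)

From Stdlib Require Import Reals List Arith Lra Lia Classical ClassicalEpsilon FunctionalExtensionality PropExtensionality.
From mathcomp Require filter.
Import ListNotations.
Open Scope R_scope.

(** * Ultrafilters and ultralimits *)

Record ultrafilter {T : Type} (U : (T -> Prop) -> Prop) : Prop := {
  uf_and : forall A B, U A -> U B -> U (fun x => A x /\ B x);
  uf_mono : forall A B : T -> Prop, (forall x, A x -> B x) -> U A -> U B;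
  uf_witness : forall A, U A -> exists x, A x;
  uf_compl : forall A, U A \/ U (fun x => ~ A x) }.
Arguments uf_and {T U} _ {A B}.
Arguments uf_mono {T U} _ {A B}.
Arguments uf_witness {T U} _ {A}.
Arguments uf_compl {T U}.

Lemma ultrafilter_extends {T : Type} (F : (T -> Prop) -> Prop) :
  F (fun _ => True) ->
  (forall A B, F A -> F B -> F (fun x => A x /\ B x)) ->
  (forall A B : T -> Prop, (forall x, A x -> B x) -> F A -> F B) ->
  (forall A, F A -> exists x, A x) ->
  exists U, ultrafilter U /\ forall A, F A -> U A.
Proof.
  intros FT FI FS Fex.
  assert (PF : filter.ProperFilter F).
  { apply filter.Build_ProperFilter_ex; [exact Fex|]. split; [exact FT|exact FI|exact FS]. }
  destruct (filter.ultraFilterLemma PF) as [U [UU FU]].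
  exists U. split; [|exact FU]. split.
  - intros A B. apply filter.filterI.
  - intros A B. apply filter.filterS.
  - intros A. apply filter.filter_ex.
  - intros A. exact (filter.in_ultra_setVsetC A UU).
Qed.

Definition eventually (A : nat -> Prop) : Prop := exists N, forall n, (N <= n)%nat -> A n.

Lemma ultrafilter_eventually :
  exists U, ultrafilter U /\ forall A, eventually A -> U A.
Proof.
  apply ultrafilter_extends.
  - exists O. auto.
  - intros A B [N1 h1] [N2 h2]. exists (max N1 N2). intros n hn. split; [apply h1|apply h2]; lia.
  - intros A B hAB [N h]. exists N. auto.
  - intros A [N h]. exists N. apply h. lia.
Qed.

Lemma ultrafilter_finite_choice {T A : Type} (U : (T -> Prop) -> Prop) (g : T -> A) (xs : list A) :
  ultrafilter U -> U (fun t => In (g t) xs) -> exists r, In r xs /\ U (fun t => g t = r).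
Proof.
  intro hU. induction xs as [|x xs IH]; intro h.
  - destruct (uf_witness hU h) as [t []].
  - destruct (uf_compl hU (fun t => g t = x)) as [h1|h1]; [exists x; simpl; auto|].
    destruct IH as [r [hr hr']]; [|exists r; simpl; auto].
    eapply (uf_mono hU); [|exact (uf_and hU h1 h)].
    intros t [a [b|b]]; [congruence|exact b].
Qed.

Section UltraLimit.
Variable U : (nat -> Prop) -> Prop.
Hypothesis U_ultra : ultrafilter U.
Hypothesis U_eventually : forall A, eventually A -> U A.

Definition ulim_to (a : nat -> R) (L : R) : Prop :=
  forall eps, eps > 0 -> U (fun n => Rabs (a n - L) < eps).

Lemma ulim_to_unique a L1 L2 : ulim_to a L1 -> ulim_to a L2 -> L1 = L2.
Proof.
  intros h1 h2. apply NNPP. intro ne.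
  set (e := Rabs (L1 - L2) / 2).
  assert (he : e > 0) by (unfold e; assert (Rabs (L1 - L2) > 0) by (apply Rabs_pos_lt; lra); lra).
  destruct (uf_witness U_ultra (uf_and U_ultra (h1 e he) (h2 e he))) as [n [a1 a2]].
  assert (Rabs (L1 - L2) <= Rabs (a n - L1) + Rabs (a n - L2)).
  { replace (L1 - L2) with (-(a n - L1) + (a n - L2)) by ring.
    eapply Rle_trans; [apply Rabs_triang|]. rewrite Rabs_Ropp. lra. }
  unfold e in *. lra.
Qed.

(* The limit is the supremum of the levels [r] exceeded on a [U]-large set. *)
Lemma ulim_to_exists a : (forall n, 0 <= a n <= 1) -> exists L, ulim_to a L.
Proof.
  intro hb.
  set (E := fun r => U (fun n => r <= a n)).
  assert (hE0 : E 0) by (apply U_eventually; exists O; intros; apply hb).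
  assert (hbd : bound E).
  { exists 1. intros r hr. destruct (uf_witness U_ultra hr) as [n hn]. specialize (hb n). lra. }
  destruct (completeness E hbd (ex_intro _ 0 hE0)) as [L [hub hlub]].
  exists L. intros eps he.
  assert (hlow : U (fun n => L - eps < a n)).
  { destruct (classic (exists r, E r /\ r > L - eps)) as [[r [hr hr']]|hn].
    - apply (uf_mono U_ultra (fun n h => Rlt_le_trans _ _ _ hr' h) hr).
    - exfalso. assert (L <= L - eps); [|lra]. apply hlub. intros r hr.
      apply Rnot_gt_le. intro. apply hn. exists r. auto. }
  assert (hup : U (fun n => a n < L + eps)).
  { destruct (uf_compl U_ultra (fun n => L + eps <= a n)) as [h|h].
    - exfalso. assert (L + eps <= L) by (apply hub; exact h). lra.
    - apply (uf_mono U_ultra (fun n hn => Rnot_le_lt _ _ hn) h). }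
  eapply (uf_mono U_ultra); [|exact (uf_and U_ultra hlow hup)].
  intros n [p q]. apply Rabs_def1; lra.
Qed.

Definition ulim (a : nat -> R) : R :=
  match excluded_middle_informative (exists L, ulim_to a L) with
  | left h => proj1_sig (constructive_indefinite_description _ h)
  | right _ => 0
  end.

Lemma ulim_eq a L : ulim_to a L -> ulim a = L.
Proof.
  intro h. unfold ulim. destruct (excluded_middle_informative _) as [h'|n].
  - destruct (constructive_indefinite_description _ h') as [L' hL']. simpl.
    apply (ulim_to_unique a); assumption.
  - exfalso. apply n. exists L. exact h.
Qed.

Lemma ulim_spec a : (forall n, 0 <= a n <= 1) -> ulim_to a (ulim a).
Proof.
  intro hb. destruct (ulim_to_exists a hb) as [L hL]. rewrite (ulim_eq a L hL). exact hL.
Qed.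

Lemma ulim_to_const c : ulim_to (fun _ => c) c.
Proof.
  intros e he. apply U_eventually. exists O. intros. rewrite Rminus_diag, Rabs_R0. exact he.
Qed.

Lemma ulim_to_plus a b La Lb :
  ulim_to a La -> ulim_to b Lb -> ulim_to (fun n => a n + b n) (La + Lb).
Proof.
  intros ha hb e he.
  eapply (uf_mono U_ultra); [|exact (uf_and U_ultra (ha (e/2) ltac:(lra)) (hb (e/2) ltac:(lra)))].
  intros n [h1 h2]. replace (a n + b n - (La + Lb)) with ((a n - La) + (b n - Lb)) by ring.
  eapply Rle_lt_trans; [apply Rabs_triang|]. lra.
Qed.

Lemma ulim_to_close a b d L :
  (forall n, Rabs (b n - a n) <= d n) -> Un_cv d 0 -> ulim_to a L -> ulim_to b L.
Proof.
  intros hd hc ha e he.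
  assert (hsmall : U (fun n => d n < e/2)).
  { apply U_eventually. destruct (hc (e/2) ltac:(lra)) as [N hN]. exists N. intros n hn.
    specialize (hN n hn). unfold R_dist in hN. rewrite Rminus_0_r in hN.
    pose proof (Rle_abs (d n)). lra. }
  eapply (uf_mono U_ultra); [|exact (uf_and U_ultra (ha (e/2) ltac:(lra)) hsmall)].
  intros n [h1 h2]. replace (b n - L) with ((b n - a n) + (a n - L)) by ring.
  eapply Rle_lt_trans; [apply Rabs_triang|]. specialize (hd n). lra.
Qed.

Lemma ulim_to_nonneg a L : (forall n, 0 <= a n) -> ulim_to a L -> 0 <= L.
Proof.
  intros hn h. apply Rnot_gt_le. intro hl.
  destruct (uf_witness U_ultra (h (-L) ltac:(lra))) as [n hh]. specialize (hn n).
  pose proof (Rle_abs (a n - L)). lra.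
Qed.

End UltraLimit.

(** * Inverse semigroups and the core [D e0] *)

Section InverseSemigroup.
Context {S : InvSemigroup}.

Definition idem (e : S) : Prop := smul e e = e.

Ltac reassoc := repeat rewrite <- smul_assoc.

Lemma sstar_involutive (s : S) : sstar (sstar s) = s.
Proof. symmetry. apply sstar_uniq; [apply sstar_r|apply sstar_l]. Qed.

Lemma idem_sstar_mul (s : S) : idem (smul (sstar s) s).
Proof. unfold idem. rewrite smul_assoc, sstar_r. reflexivity. Qed.

Lemma idem_mul_sstar (s : S) : idem (smul s (sstar s)).
Proof. pose proof (idem_sstar_mul (sstar s)) as h. rewrite sstar_involutive in h. exact h. Qed.

Lemma idem_sstar (e : S) : idem e -> sstar e = e.
Proof. intro h. symmetry. apply sstar_uniq; unfold idem in h; rewrite !h; reflexivity. Qed.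

Lemma idem_absorb (e z : S) : idem e -> smul e (smul e z) = smul e z.
Proof. intro h. rewrite smul_assoc, h. reflexivity. Qed.

(* [x := (ef)^*] satisfies [x = f x e] by uniqueness of inverses, hence [x]
   is idempotent, and so is [ef = x^*]. *)
Lemma idem_mul (e f : S) : idem e -> idem f -> idem (smul e f).
Proof.
  intros he hf.
  set (x := sstar (smul e f)).
  assert (L1 : smul e (smul f (smul x (smul e f))) = smul e f).
  { transitivity (smul (smul (smul e f) x) (smul e f)); [reassoc; reflexivity|apply sstar_l]. }
  assert (L2 : smul x (smul e (smul f x)) = x).
  { transitivity (smul (smul x (smul e f)) x); [reassoc; reflexivity|apply sstar_r]. }
  assert (Hx : smul f (smul x e) = x).
  { unfold x. apply sstar_uniq; fold x.
    - reassoc. rewrite (idem_absorb f) by exact hf. rewrite (idem_absorb e) by exact he. exact L1.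
    - reassoc. rewrite (idem_absorb e) by exact he. rewrite (idem_absorb f) by exact hf.
      transitivity (smul f (smul (smul x (smul e (smul f x))) e)); [reassoc; reflexivity|].
      rewrite L2. reflexivity. }
  assert (Hxx : smul x x = x).
  { transitivity (smul (smul f (smul x e)) (smul f (smul x e))); [rewrite Hx; reflexivity|].
    transitivity (smul f (smul (smul x (smul e (smul f x))) e)); [reassoc; reflexivity|].
    rewrite L2. exact Hx. }
  unfold idem. replace (smul e f) with (sstar x) by (apply sstar_involutive).
  rewrite (idem_sstar x Hxx). exact Hxx.
Qed.

Lemma idem_comm (e f : S) : idem e -> idem f -> smul e f = smul f e.
Proof.
  intros he hf.
  assert (h1 := idem_mul _ _ he hf). assert (h2 := idem_mul _ _ hf he).
  rewrite <- (idem_sstar _ h2).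
  unfold idem in h1, h2. reassoc. rewrite <- !smul_assoc in h1, h2.
  apply sstar_uniq.
  - reassoc. rewrite (idem_absorb e) by exact he. rewrite (idem_absorb f) by exact hf. exact h2.
  - reassoc. rewrite (idem_absorb f) by exact hf. rewrite (idem_absorb e) by exact he. exact h1.
Qed.

Lemma is_proj_idem (e : S) : is_proj e <-> idem e.
Proof.
  split.
  - intros [s ->]. apply idem_sstar_mul.
  - intro h. exists e. rewrite (idem_sstar e h). symmetry. exact h.
Qed.

Context {e0 : S} (e0_min : minimal_proj e0).

Lemma minimal_proj_idem : idem e0.
Proof. apply is_proj_idem, e0_min. Qed.

(* [e0 f] is an idempotent below [e0], hence equal to it. *)
Lemma minimal_proj_below (f : S) : idem f -> smul e0 f = e0.
Proof.
  intro hf. apply (proj2 e0_min).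
  - apply is_proj_idem, idem_mul; [apply minimal_proj_idem|exact hf].
  - unfold proj_le. reassoc. rewrite (idem_comm _ _ hf minimal_proj_idem).
    rewrite (idem_absorb e0) by apply minimal_proj_idem. reflexivity.
Qed.

Lemma idem_conj_minimal (s : S) : idem (smul (sstar s) (smul e0 s)).
Proof.
  unfold idem. reassoc.
  transitivity (smul (sstar s) (smul (smul e0 (smul s (sstar s))) (smul e0 s))); [reassoc; reflexivity|].
  rewrite minimal_proj_below by apply idem_mul_sstar.
  rewrite (idem_absorb e0) by apply minimal_proj_idem. reflexivity.
Qed.

End InverseSemigroup.

Section Core.
Context {S : InvSemigroup} {X : Type} (al : Rep S X).

Lemma idem_act (e : S) x : idem e -> rdom al e x -> ract al e x = x.
Proof.
  intros he hx.
  assert (h2 : rdom al (smul e e) x) by (rewrite he; exact hx).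
  pose proof (proj2 (proj1 (rdom_mul al e e x) h2)) as hy.
  pose proof (ract_mul al e e x h2) as hm. rewrite he in hm.
  apply (ract_inj al e _ _ hy hx). congruence.
Qed.

Lemma act_sstar_cancel (s : S) x : rdom al (smul (sstar s) s) x ->
  rdom al s x /\ rdom al (sstar s) (ract al s x) /\ ract al (sstar s) (ract al s x) = x.
Proof.
  intro h. pose proof h as h'. apply rdom_mul in h' as [h1 h2].
  split; [exact h1|]. split; [exact h2|].
  rewrite <- (ract_mul al _ _ _ h). apply idem_act; [apply idem_sstar_mul|exact h].
Qed.

Lemma img_sstar_img (s : S) (B : X -> Prop) : subset B (D al (smul (sstar s) s)) ->
  forall x, img al (sstar s) (img al s B) x <-> B x.
Proof.
  intros hB x. split.
  - intros [y [[z [hz [_ ->]]] [_ ->]]]. rewrite (proj2 (proj2 (act_sstar_cancel s z (hB z hz)))).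
    exact hz.
  - intro hx. destruct (act_sstar_cancel s x (hB x hx)) as [h1 [h2 h3]].
    exists (ract al s x). split; [exists x; auto|]. auto.
Qed.

Context {e0 : S} (e0_min : minimal_proj e0).

(* Every [s^* e0 s] is idempotent, so [e0 (s^* e0 s) = e0]: on [D e0] every
   [alpha_s] is defined and lands back in [D e0]. *)
Lemma core_act (s : S) x : D al e0 x -> rdom al s x /\ D al e0 (ract al s x).
Proof.
  intro hx. unfold D in *.
  assert (h : rdom al (smul e0 (smul (sstar s) (smul e0 s))) x).
  { rewrite (minimal_proj_below e0_min) by apply (idem_conj_minimal e0_min). exact hx. }
  apply rdom_mul in h as [h _]. apply rdom_mul in h as [h _]. apply rdom_mul in h. exact h.
Qed.

Lemma core_sub_dom (t : S) : subset (D al e0) (D al (smul (sstar t) t)).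
Proof.
  intros x hx. unfold D in *.
  assert (h : rdom al (smul e0 (smul (sstar t) t)) x).
  { rewrite (minimal_proj_below e0_min) by apply idem_sstar_mul. exact hx. }
  apply rdom_mul in h as [h _]. exact h.
Qed.

Lemma core_act_inj (s : S) x y :
  D al e0 x -> D al e0 y -> ract al s x = ract al s y -> x = y.
Proof. intros hx hy. apply (ract_inj al s); apply core_act; assumption. Qed.

End Core.

(** * Amenability excludes paradoxical decompositions *)

Fixpoint rsum (f : nat -> R) (n : nat) : R :=
  match n with O => 0 | S k => rsum f k + f k end.

Lemma rsum_ext f g n : (forall i, (i < n)%nat -> f i = g i) -> rsum f n = rsum g n.
Proof.
  induction n; intro h; simpl; [reflexivity|].
  rewrite IHn by (intros; apply h; lia). rewrite (h n) by lia. reflexivity.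
Qed.

Lemma pred_ext {T : Type} (A B : T -> Prop) : (forall x, A x <-> B x) -> A = B.
Proof.
  intro h. apply functional_extensionality. intro x. apply propositional_extensionality, h.
Qed.

Section FinitelyAdditiveProbability.
Context {T : Type} (mu : (T -> Prop) -> ereal).
Hypothesis mu_nonneg : forall B, enonneg (mu B).
Hypothesis mu_add : forall A B, disjoint A B -> mu (fun x => A x \/ B x) = eadd (mu A) (mu B).
Hypothesis mu_full : mu (fun _ => True) = Fin 1.

Lemma mu_finite A : exists r, mu A = Fin r.
Proof.
  assert (h : mu (fun _ => True) = mu (fun x => A x \/ ~ A x))
    by (f_equal; apply pred_ext; intro x; tauto).
  rewrite mu_add in h by (intros x a b; tauto). rewrite mu_full in h.
  destruct (mu A) as [r|]; [exists r; reflexivity|discriminate].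
Qed.

(* The real value of [mu]; the junk value at [PInf] never occurs. *)
Definition mass (A : T -> Prop) : R := match mu A with Fin r => r | PInf => 0 end.

Lemma mass_spec A : mu A = Fin (mass A).
Proof. unfold mass. destruct (mu_finite A) as [r ->]. reflexivity. Qed.

Lemma mass_ext A B : (forall x, A x <-> B x) -> mass A = mass B.
Proof. intro h. rewrite (pred_ext A B h). reflexivity. Qed.

Lemma mass_nonneg A : 0 <= mass A.
Proof. pose proof (mu_nonneg A) as h. rewrite mass_spec in h. exact h. Qed.


Lemma mass_add A B : disjoint A B -> mass (fun x => A x \/ B x) = mass A + mass B.
Proof.
  intro h. pose proof (mu_add A B h) as e. rewrite !mass_spec in e. injection e. auto.
Qed.

Lemma mass_mono A B : subset A B -> mass A <= mass B.
Proof.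
  intro h. rewrite (mass_ext B (fun x => A x \/ (B x /\ ~ A x))).
  - rewrite mass_add by (intros x a [_ b]; tauto). pose proof (mass_nonneg (fun x => B x /\ ~ A x)). lra.
  - intro x. split; [intro b; destruct (classic (A x)); tauto|intros [a|[b _]]; auto].
Qed.

Lemma mass_union (C : nat -> T -> Prop) n :
  (forall i j, (i < n)%nat -> (j < n)%nat -> i <> j -> disjoint (C i) (C j)) ->
  mass (fun x => exists i, (i < n)%nat /\ C i x) = rsum (fun i => mass (C i)) n.
Proof.
  induction n; intro h; simpl.
  - assert (e : mass (fun _ => False) = mass (fun x => False \/ False)) by (apply mass_ext; tauto).
    rewrite mass_add in e by (intros x []).
    rewrite (mass_ext _ (fun _ => False)) by (intro x; split; [intros [i [hi _]]; lia|intros []]). lra.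
  - rewrite (mass_ext _ (fun x => (exists i, (i < n)%nat /\ C i x) \/ C n x)).
    + rewrite mass_add, IHn; [reflexivity| |].
      * intros i j hi hj. apply h; lia.
      * intros x [i [hi c1]] c2. exact (h i n ltac:(lia) ltac:(lia) ltac:(lia) x c1 c2).
    + intro x. split.
      * intros [i [hi c]]. destruct (Nat.eq_dec i n) as [->|ne]; [right; exact c|left; exists i; split; [lia|exact c]].
      * intros [[i [hi c]]|c]; [exists i; split; [lia|exact c]|exists n; split; [lia|exact c]].
Qed.

End FinitelyAdditiveProbability.

Lemma mass_disj_union_img {S : InvSemigroup} {X : Type} (al : Rep S X) mu :
  (forall B, enonneg (mu B)) ->
  (forall A B, disjoint A B -> mu (fun x => A x \/ B x) = eadd (mu A) (mu B)) ->
  mu (fun _ => True) = Fin 1 ->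
  (forall (s : S) B, subset B (D al (smul (sstar s) s)) -> mu B = mu (img al s B)) ->
  forall A n s Ai, (forall i, (i < n)%nat -> subset (Ai i) (D al (smul (sstar (s i)) (s i)))) ->
  disj_union_img al A n s Ai -> mass mu A = rsum (fun i => mass mu (Ai i)) n.
Proof.
  intros hnn hadd hfull hinv A n s Ai hAi [hcover hdisj].
  rewrite (mass_ext mu A _ hcover), mass_union by auto.
  apply rsum_ext. intros i hi. unfold mass. rewrite (hinv _ _ (hAi i hi)). reflexivity.
Qed.

Lemma amenable_not_paradoxical {S : InvSemigroup} {X : Type} (al : Rep S X) (e0 : S) :
  minimal_proj e0 -> amenable al -> ~ paradoxical al (D al e0).
Proof.
  intros e0_min [mu [hnn [hadd [hfull [hinv hres]]]]]
    [n [k [Ai [Bj [s [t [hA [hB [hU1 [hU2 [hAs [hBs [hAA [hBB hAB]]]]]]]]]]]]]].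
  assert (hcore : mass mu (D al e0) = 1).
  { destruct (proj1 e0_min) as [u hu].
    rewrite (mass_ext mu _ (fun x => True /\ D al (smul (sstar u) u) x))
      by (intro x; unfold D; rewrite <- hu; tauto).
    unfold mass. rewrite <- hres, hfull. reflexivity. }
  assert (h1 := mass_disj_union_img al mu hnn hadd hfull hinv _ _ _ _ hA hU1).
  assert (h2 := mass_disj_union_img al mu hnn hadd hfull hinv _ _ _ _ hB hU2).
  assert (hpieces : mass mu (fun x => (exists i, (i < n)%nat /\ Ai i x) \/ (exists j, (j < k)%nat /\ Bj j x))
                    = rsum (fun i => mass mu (Ai i)) n + rsum (fun j => mass mu (Bj j)) k).
  { rewrite (mass_add mu hadd hfull) by (intros x [i [hi a]] [j [hj b]]; exact (hAB i j hi hj x a b)).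
    rewrite !(mass_union mu hadd hfull); auto. }
  assert (hle : mass mu (fun x => (exists i, (i < n)%nat /\ Ai i x) \/ (exists j, (j < k)%nat /\ Bj j x))
                <= mass mu (D al e0)).
  { apply mass_mono; auto. intros x [[i [hi a]]|[j [hj b]]]; [exact (hAs i hi x a)|exact (hBs j hj x b)]. }
  lra.
Qed.

(** * Folner sets give an invariant mean *)

Definition bdec {T : Type} (P : T -> Prop) (x : T) : bool :=
  if excluded_middle_informative (P x) then true else false.

Definition eqdec {T : Type} (x y : T) : {x = y} + {x <> y} := excluded_middle_informative (x = y).

Lemma bdec_spec {T : Type} (P : T -> Prop) x : bdec P x = true <-> P x.
Proof. unfold bdec. destruct (excluded_middle_informative (P x)); split; intro; try tauto; discriminate. Qed.

Lemma in_filter_bdec {T : Type} (P : T -> Prop) l x : In x (filter (bdec P) l) <-> In x l /\ P x.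
Proof. rewrite filter_In, bdec_spec. tauto. Qed.

Definition cnt {T : Type} (P : T -> Prop) (l : list T) : nat := length (filter (bdec P) l).

Lemma cnt_ext {T : Type} (P Q : T -> Prop) l :
  (forall x, In x l -> (P x <-> Q x)) -> cnt P l = cnt Q l.
Proof.
  intro h. unfold cnt. f_equal. apply filter_ext_in. intros x hx.
  unfold bdec. destruct (excluded_middle_informative (P x)), (excluded_middle_informative (Q x)); firstorder.
Qed.

Lemma cnt_or {T : Type} (P Q : T -> Prop) l : disjoint P Q ->
  cnt (fun x => P x \/ Q x) l = (cnt P l + cnt Q l)%nat.
Proof.
  intro h. unfold cnt. induction l as [|a l IH]; [reflexivity|]. simpl.
  destruct (bdec (fun x => P x \/ Q x) a) eqn:e1, (bdec P a) eqn:e2, (bdec Q a) eqn:e3;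
    simpl; rewrite IH; try lia; unfold bdec in *;
    repeat destruct (excluded_middle_informative _); firstorder discriminate.
Qed.

Lemma cnt_true {T : Type} (l : list T) : cnt (fun _ => True) l = length l.
Proof.
  unfold cnt. rewrite (filter_ext_in _ (fun _ => true)), forallb_filter_id; [reflexivity|apply forallb_forall; auto|].
  intros x _. apply bdec_spec. exact I.
Qed.

Lemma cnt_le {T : Type} (P : T -> Prop) l : (cnt P l <= length l)%nat.
Proof. apply filter_length_le. Qed.

Lemma cnt_compl {T : Type} (P : T -> Prop) l : (cnt P l + cnt (fun x => ~ P x) l)%nat = length l.
Proof.
  rewrite <- cnt_or by (intros x; tauto). rewrite <- (cnt_true l).
  apply cnt_ext. intros x _. split; [tauto|intros _; apply classic].
Qed.

Lemma cnt_pos {T : Type} (P : T -> Prop) l x : In x l -> P x -> (0 < cnt P l)%nat.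
Proof.
  intros hx hp. assert (h : In x (filter (bdec P) l)) by (apply in_filter_bdec; auto).
  unfold cnt. destruct (filter (bdec P) l); [contradiction|simpl; lia].
Qed.

Lemma NoDup_map_inj_in {A B : Type} (f : A -> B) l :
  NoDup l -> (forall x y, In x l -> In y l -> f x = f y -> x = y) -> NoDup (map f l).
Proof.
  induction l as [|a l IH]; intros hn hi; simpl; [constructor|].
  inversion hn; subst. constructor.
  - intro hin. apply in_map_iff in hin as [y [e hy]].
    assert (y = a) by (apply hi; simpl; auto). subst. contradiction.
  - apply IH; [assumption|]. intros x y hx hy. apply hi; simpl; auto.
Qed.

Lemma INR_pos_length {T : Type} (l : list T) : l <> [] -> INR (length l) > 0.
Proof. intro h. destruct l; [contradiction|]. simpl length. apply lt_0_INR. lia. Qed.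

Section FolnerAmenable.
Context {S : InvSemigroup} {X : Type} (al : Rep S X) {e0 : S} (e0_min : minimal_proj e0).

(* Points of [F] in [B] are sent injectively by [alpha_t] either into
   [F] (then into [alpha_t(B)]) or out of [F] (then into the boundary). *)
Lemma cnt_le_cnt_img (t : S) (B : X -> Prop) (F : list X) c :
  NoDup F -> (forall x, In x F -> D al e0 x) ->
  card_is (fun y => img al t (fun x => In x F /\ D al (smul (sstar t) t) x) y /\ ~ In y F) c ->
  (cnt B F <= cnt (img al t B) F + c)%nat.
Proof.
  intros hnd hcore [bd [hbnd [hlen hbd]]]. rewrite <- hlen.
  unfold cnt. rewrite <- (length_map (ract al t) (filter (bdec B) F)), <- length_app.
  apply NoDup_incl_length.
  - apply NoDup_map_inj_in; [apply NoDup_filter, hnd|].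
    intros x y hx hy. apply in_filter_bdec in hx, hy.
    apply (core_act_inj al e0_min t); apply hcore; tauto.
  - intros y hy. apply in_map_iff in hy as [x [<- hx]]. apply in_filter_bdec in hx as [hx hbx].
    pose proof (core_act al e0_min t x (hcore x hx)) as [hdx _].
    apply in_app_iff. destruct (classic (In (ract al t x) F)) as [hy|hy].
    + left. apply in_filter_bdec. split; [exact hy|]. exists x. auto.
    + right. apply hbd. split; [|exact hy]. exists x.
      split; [split; [exact hx|apply (core_sub_dom al e0_min), hcore, hx]|auto].
Qed.

Definition density (F : list X) (B : X -> Prop) : R := INR (cnt B F) / INR (length F).

Lemma density_bounds F B : F <> [] -> 0 <= density F B <= 1.
Proof.
  intro hne. pose proof (INR_pos_length F hne). unfold density. split.
  - apply Rmult_le_pos; [apply pos_INR|left; apply Rinv_0_lt_compat; lra].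
  - apply (Rmult_le_reg_r (INR (length F))); [lra|]. unfold Rdiv.
    rewrite Rmult_assoc, Rinv_l, Rmult_1_r, Rmult_1_l by lra. apply le_INR, cnt_le.
Qed.

Lemma density_img_close (s : S) (B : X -> Prop) (F : list X) c c' :
  subset B (D al (smul (sstar s) s)) -> NoDup F -> F <> [] -> (forall x, In x F -> D al e0 x) ->
  card_is (fun y => img al s (fun x => In x F /\ D al (smul (sstar s) s) x) y /\ ~ In y F) c ->
  card_is (fun y => img al (sstar s) (fun x => In x F /\ D al (smul (sstar (sstar s)) (sstar s)) x) y
                    /\ ~ In y F) c' ->
  Rabs (density F (img al s B) - density F B) <= INR c' / INR (length F) + INR c / INR (length F).
Proof.
  intros hB hnd hne hcore hc hc'.
  pose proof (cnt_le_cnt_img s B F c hnd hcore hc) as k1.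
  pose proof (cnt_le_cnt_img (sstar s) (img al s B) F c' hnd hcore hc') as k2.
  rewrite (cnt_ext (img al (sstar s) (img al s B)) B) in k2 by (intros x _; apply img_sstar_img, hB).
  apply le_INR in k1, k2. rewrite plus_INR in k1, k2.
  pose proof (Rinv_0_lt_compat _ (INR_pos_length F hne)) as hi.
  set (i := / INR (length F)) in *. pose proof (pos_INR c). pose proof (pos_INR c').
  assert (h1 : (INR (cnt (img al s B) F) - INR (cnt B F)) * i <= INR c' * i)
    by (apply Rmult_le_compat_r; lra).
  assert (h2 : (INR (cnt B F) - INR (cnt (img al s B) F)) * i <= INR c * i)
    by (apply Rmult_le_compat_r; lra).
  unfold density, Rdiv. fold i. apply Rabs_le. split; nra.
Qed.

Lemma folner_amenable : domain_Folner al (D al e0) -> amenable al.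
Proof.
  intros [F [hnd [hne [hin hfol]]]].
  destruct ultrafilter_eventually as [U [hU hev]].
  assert (hb : forall B n, 0 <= density (F n) B <= 1) by (intros; apply density_bounds, hne).
  assert (hspec : forall B, ulim_to U (fun n => density (F n) B) (ulim U (fun n => density (F n) B)))
    by (intro B; apply (ulim_spec U hU hev), hb).
  exists (fun B => Fin (ulim U (fun n => density (F n) B))).
  split; [|split; [|split; [|split]]].
  - intro B. apply (ulim_to_nonneg U hU _ _ (fun n => proj1 (hb B n)) (hspec B)).
  - intros A B hd. simpl. f_equal. apply (ulim_eq U hU).
    rewrite (functional_extensionality (fun n => density (F n) (fun x => A x \/ B x))
                                       (fun n => density (F n) A + density (F n) B)).
    + apply (ulim_to_plus U hU); apply hspec.
    + intro n. unfold density. rewrite cnt_or, plus_INR by exact hd. unfold Rdiv. ring.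
  - f_equal. apply (ulim_eq U hU).
    rewrite (functional_extensionality (fun n => density (F n) (fun _ => True)) (fun _ => 1)).
    + apply (ulim_to_const U hev).
    + intro n. unfold density, Rdiv. rewrite cnt_true, Rinv_r; [reflexivity|].
      pose proof (INR_pos_length (F n) (hne n)). lra.
  - intros s B hB. f_equal. symmetry. apply (ulim_eq U hU).
    destruct (hfol s) as [c [hc hcv]]. destruct (hfol (sstar s)) as [c' [hc' hcv']].
    apply (ulim_to_close U hU hev (fun n => density (F n) B) _
             (fun n => INR (c' n) / INR (length (F n)) + INR (c n) / INR (length (F n)))).
    + intro n. apply density_img_close; auto. intros x hx. exact (hin n x hx).
    + pose proof (CV_plus _ _ _ _ hcv' hcv) as h. rewrite Rplus_0_r in h. exact h.
    + apply hspec.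
  - intros t B. do 2 f_equal. apply functional_extensionality. intro n. unfold density. do 2 f_equal.
    apply cnt_ext. intros x hx. split; [|tauto]. intro b. split; [exact b|].
    apply (core_sub_dom al e0_min), (hin n), hx.
Qed.

End FolnerAmenable.

(** * Hall's marriage theorem *)

Section Hall.
Context {L Rt : Type}.

Definition nbhd (nb : L -> list Rt) (l : list L) : list Rt := nodup eqdec (flat_map nb l).

Definition hall_condition (nb : L -> list Rt) (l : list L) : Prop :=
  forall l', NoDup l' -> incl l' l -> (length l' <= length (nbhd nb l'))%nat.

Definition matching (nb : L -> list Rt) (l : list L) (mf : L -> Rt) : Prop :=
  (forall v, In v l -> In (mf v) (nb v)) /\
  (forall v w, In v l -> In w l -> mf v = mf w -> v = w).

Definition avoid (T : list Rt) (nb : L -> list Rt) (w : L) : list Rt :=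
  filter (bdec (fun y => ~ In y T)) (nb w).

Lemma in_nbhd nb l y : In y (nbhd nb l) <-> exists v, In v l /\ In y (nb v).
Proof. unfold nbhd. rewrite nodup_In, in_flat_map. tauto. Qed.

Lemma in_avoid T nb w y : In y (avoid T nb w) <-> In y (nb w) /\ ~ In y T.
Proof. apply (in_filter_bdec (fun y => ~ In y T)). Qed.

Lemma length_le_nbhd nb l r :
  NoDup r -> (forall y, In y r -> exists v, In v l /\ In y (nb v)) -> (length r <= length (nbhd nb l))%nat.
Proof. intros hr h. apply NoDup_incl_length; [exact hr|]. intros y hy. apply in_nbhd, h, hy. Qed.

Lemma length_nbhd_avoid nb T l :
  (length (nbhd nb l) <= length (nbhd (avoid T nb) l) + length T)%nat.
Proof.
  rewrite <- length_app. apply NoDup_incl_length; [apply NoDup_nodup|].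
  intros y hy. apply in_nbhd in hy as [v [hv hy]]. apply in_app_iff.
  destruct (classic (In y T)) as [hT|hT]; [right; exact hT|left].
  apply in_nbhd. exists v. split; [exact hv|]. apply in_avoid. auto.
Qed.

Lemma hall_condition_incl nb l l' : hall_condition nb l -> incl l' l -> hall_condition nb l'.
Proof. intros h hi l'' hn hi'. apply h; [exact hn|]. intros x hx. apply hi, hi', hx. Qed.

Lemma hall_condition_tight nb l l' :
  hall_condition nb l -> NoDup l' -> incl l' l -> (length (nbhd nb l') <= length l')%nat ->
  hall_condition (avoid (nbhd nb l') nb) (filter (bdec (fun w => ~ In w l')) l).
Proof.
  intros hh hn' hi' htight l2 hn2 hi2.
  assert (hout : forall w, In w l2 -> In w l /\ ~ In w l') by (intros w hw; apply (in_filter_bdec (fun w => ~ In w l')), hi2, hw).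
  assert (hbig : (length (l2 ++ l') <= length (nbhd nb (l2 ++ l')))%nat).
  { apply hh.
    - apply NoDup_app; [exact hn2|exact hn'|]. intros a ha hb. apply hout in ha. tauto.
    - intros a ha. apply in_app_iff in ha as [ha|ha]; [apply hout, ha|apply hi', ha]. }
  assert (hsplit : (length (nbhd nb (l2 ++ l')) <= length (nbhd (avoid (nbhd nb l') nb) l2) + length (nbhd nb l'))%nat).
  { rewrite <- length_app. apply NoDup_incl_length; [apply NoDup_nodup|].
    intros y hy. apply in_nbhd in hy as [v [hv hy]]. apply in_app_iff.
    destruct (classic (In y (nbhd nb l'))) as [hT|hT]; [right; exact hT|left].
    apply in_app_iff in hv as [hv|hv].
    - apply in_nbhd. exists v. split; [exact hv|]. apply in_avoid. auto.
    - exfalso. apply hT, in_nbhd. eauto. }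
  rewrite length_app in hbig. lia.
Qed.

Lemma hall_condition_surplus nb rest y :
  (forall l2, NoDup l2 -> incl l2 rest -> l2 <> [] -> (length l2 < length (nbhd nb l2))%nat) ->
  hall_condition (avoid [y] nb) rest.
Proof.
  intros hsur l2 hn2 hi2. destruct l2 as [|a l2]; [simpl; lia|].
  pose proof (hsur _ hn2 hi2 ltac:(discriminate)).
  pose proof (length_nbhd_avoid nb [y] (a :: l2)). simpl in *. lia.
Qed.

Lemma matching_glue nb l l' mf1 mf2 :
  matching nb l' mf1 ->
  matching (avoid (nbhd nb l') nb) (filter (bdec (fun w => ~ In w l')) l) mf2 ->
  matching nb l (fun w => if excluded_middle_informative (In w l') then mf1 w else mf2 w).
Proof.
  intros [h1 i1] [h2 i2].
  assert (hrest : forall w, In w l -> ~ In w l' -> In (mf2 w) (nb w) /\ ~ In (mf2 w) (nbhd nb l')).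
  { intros w hw hw'. apply in_avoid, h2, in_filter_bdec. auto. }
  assert (hin1 : forall w, In w l' -> In (mf1 w) (nbhd nb l')) by (intros w hw; apply in_nbhd; eauto).
  split.
  - intros w hw. destruct (excluded_middle_informative (In w l')); [apply h1|apply hrest]; auto.
  - intros w w' hw hw' e.
    destruct (excluded_middle_informative (In w l')) as [a|a];
      destruct (excluded_middle_informative (In w' l')) as [b|b].
    + exact (i1 w w' a b e).
    + exfalso. apply (proj2 (hrest w' hw' b)). rewrite <- e. apply hin1, a.
    + exfalso. apply (proj2 (hrest w hw a)). rewrite e. apply hin1, b.
    + apply i2; [apply in_filter_bdec; auto|apply in_filter_bdec; auto|exact e].
Qed.

Lemma matching_cons nb v rest y mf :
  In y (nb v) -> matching (avoid [y] nb) rest mf ->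
  matching nb (v :: rest) (fun w => if eqdec w v then y else mf w).
Proof.
  intros hy [h i].
  assert (hrest : forall w, In w (v :: rest) -> w <> v -> In (mf w) (nb w) /\ mf w <> y).
  { intros w [<-|hw] ne; [congruence|]. pose proof (proj1 (in_avoid _ _ _ _) (h w hw)) as hw'.
    simpl in hw'. intuition. }
  split.
  - intros w hw. destruct (eqdec w v) as [->|ne]; [exact hy|apply hrest; auto].
  - intros w w' hw hw' e. destruct (eqdec w v) as [a|a]; destruct (eqdec w' v) as [b|b].
    + congruence.
    + exfalso. apply (proj2 (hrest w' hw' b)). auto.
    + exfalso. apply (proj2 (hrest w hw a)). auto.
    + destruct hw as [<-|hw]; [congruence|]. destruct hw' as [<-|hw']; [congruence|]. auto.
Qed.

Theorem finite_hall (r0 : Rt) nb l : NoDup l -> hall_condition nb l -> exists mf, matching nb l mf.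
Proof.
  remember (length l) as n eqn:hn. revert nb l hn.
  induction n as [n IH] using lt_wf_ind. intros nb l -> hnd hh.
  destruct (classic (exists l', NoDup l' /\ incl l' l /\ l' <> [] /\ (length l' < length l)%nat /\
                                (length (nbhd nb l') <= length l')%nat))
    as [[l' [hn' [hi' [hne' [hlt ht]]]]]|hnt].
  - destruct (IH _ hlt nb l' eq_refl hn' (hall_condition_incl nb l l' hh hi')) as [mf1 hm1].
    set (rest := filter (bdec (fun w => ~ In w l')) l).
    assert (hrest : (length rest < length l)%nat).
    { destruct l' as [|w0 l'']; [congruence|].
      pose proof (cnt_compl (fun w => In w (w0 :: l'')) l).
      pose proof (cnt_pos (fun w => In w (w0 :: l'')) l w0 (hi' w0 (or_introl eq_refl)) (or_introl eq_refl)).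
      unfold rest, cnt in *. lia. }
    destruct (IH _ hrest _ rest eq_refl (NoDup_filter _ hnd) (hall_condition_tight nb l l' hh hn' hi' ht))
      as [mf2 hm2].
    eexists. exact (matching_glue nb l l' mf1 mf2 hm1 hm2).
  - destruct l as [|v rest]; [exists (fun _ => r0); split; simpl; tauto|].
    destruct (nbhd nb [v]) as [|y ys] eqn:ev.
    { assert (hv : incl [v] (v :: rest)) by (intros x [<-|[]]; left; reflexivity).
      pose proof (hh [v] (NoDup_cons _ (@in_nil _ v) (NoDup_nil _)) hv) as h.
      rewrite ev in h. simpl in h. lia. }
    assert (hy : In y (nb v)).
    { assert (hy : In y (nbhd nb [v])) by (rewrite ev; left; reflexivity).
      apply in_nbhd in hy as [w [[<-|[]] hw]]. exact hw. }
    assert (hsur : forall l2, NoDup l2 -> incl l2 rest -> l2 <> [] -> (length l2 < length (nbhd nb l2))%nat).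
    { intros l2 hn2 hi2 hne2. apply Nat.nle_gt. intro hle. apply hnt. exists l2.
      repeat split; auto.
      - intros x hx. right. apply hi2, hx.
      - simpl. inversion hnd. apply Nat.lt_succ_r, NoDup_incl_length; auto. }
    inversion hnd as [|? ? _ hnd']; subst.
    destruct (IH (length rest) ltac:(simpl; lia) _ rest eq_refl hnd' (hall_condition_surplus nb rest y hsur))
      as [mf hm].
    eexists. exact (matching_cons nb v rest y mf hy hm).
Qed.

(* Compactness: the finite matchings converge along an ultrafilter on the
   finite sets of vertices, directed by inclusion. *)
Theorem infinite_hall (r0 : Rt) (P : L -> Prop) (nb : L -> list Rt) :
  (forall l, NoDup l -> (forall v, In v l -> P v) -> (length l <= length (nbhd nb l))%nat) ->
  exists psi : L -> Rt, (forall v, P v -> In (psi v) (nb v)) /\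
                        (forall v w, P v -> P w -> psi v = psi w -> v = w).
Proof.
  intro hyp.
  set (good := fun l : list L => NoDup l /\ forall v, In v l -> P v).
  destruct (choice (fun l mf => good l -> matching nb l mf)) as [M hM].
  { intro l. destruct (classic (good l)) as [[hn hp]|hg]; [|exists (fun _ => r0); tauto].
    destruct (finite_hall r0 nb l hn) as [mf hmf]; [|exists mf; auto].
    intros l' hn' hi'. apply hyp; [exact hn'|]. intros v hv. apply hp, hi', hv. }
  set (cofinal := fun (A : list L -> Prop) =>
         exists l0, (forall v, In v l0 -> P v) /\ forall l, good l -> incl l0 l -> A l).
  assert (hcof : forall l0, (forall v, In v l0 -> P v) -> cofinal (fun l => good l /\ incl l0 l))
    by (intros l0 h; exists l0; auto).
  destruct (ultrafilter_extends cofinal) as [U [hU hFU]].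
  - exists []. split; [intros v []|]. auto.
  - intros A B [l0 [h0 hA]] [l1 [h1 hB]]. exists (l0 ++ l1). split.
    + intros v hv. apply in_app_iff in hv as [hv|hv]; auto.
    + intros l hg hi. split; [apply hA|apply hB]; auto; intros x hx; apply hi, in_app_iff; auto.
  - intros A B hAB [l0 [h0 hA]]. exists l0. split; [exact h0|]. intros l hg hi. apply hAB, hA; assumption.
  - intros A [l0 [h0 hA]]. exists (nodup eqdec l0). apply hA.
    + split; [apply NoDup_nodup|]. intros v hv. apply nodup_In in hv. auto.
    + intros x hx. apply nodup_In. exact hx.
  - destruct (choice (fun v r => P v -> In r (nb v) /\ U (fun l => M l v = r))) as [psi hpsi].
    { intro v. destruct (classic (P v)) as [hp|hp]; [|exists r0; tauto].
      destruct (ultrafilter_finite_choice U (fun l => M l v) (nb v) hU) as [r hr]; [|exists r; auto].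
      apply (uf_mono hU (A := fun l => good l /\ incl [v] l)).
      - intros l [hg hi]. apply (proj1 (hM l hg)), hi. left. reflexivity.
      - apply hFU, hcof. intros w [<-|[]]. exact hp. }
    exists psi. split; [intros v hp; apply (hpsi v hp)|].
    intros v w hv hw e.
    assert (hvw : U (fun l => good l /\ incl [v; w] l)) by (apply hFU, hcof; intros x [<-|[<-|[]]]; auto).
    destruct (uf_witness hU (uf_and hU hvw (uf_and hU (proj2 (hpsi v hv)) (proj2 (hpsi w hw)))))
      as [l [[hg hi] [e1 e2]]].
    apply (proj2 (hM l hg)); [apply hi; simpl; auto|apply hi; simpl; auto|congruence].
Qed.

End Hall.

(** * Paradoxical decompositions from expansion *)

Section Paradox.
Context {S : InvSemigroup} {X : Type} (al : Rep S X) {e0 : S} (e0_min : minimal_proj e0).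

Definition core_finset (F : list X) : Prop := NoDup F /\ F <> [] /\ forall x, In x F -> D al e0 x.

Definition boundary (s : S) (F : list X) : list X :=
  filter (bdec (fun y => ~ In y F)) (map (ract al s) F).

Lemma boundary_NoDup s F : core_finset F -> NoDup (boundary s F).
Proof.
  intros [hn [_ hc]]. apply NoDup_filter, NoDup_map_inj_in; [exact hn|].
  intros x z hx hz. apply (core_act_inj al e0_min s); auto.
Qed.

Lemma card_boundary s F : core_finset F ->
  card_is (fun y => img al s (fun x => In x F /\ D al (smul (sstar s) s) x) y /\ ~ In y F)
          (length (boundary s F)).
Proof.
  intro hF. exists (boundary s F). split; [apply boundary_NoDup, hF|]. split; [reflexivity|].
  intro y. unfold boundary. rewrite in_filter_bdec, in_map_iff. split.
  - intros [[x [<- hx]] hy]. split; [|exact hy]. exists x.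
    assert (hcx : D al e0 x) by (apply hF, hx).
    split; [split; [exact hx|apply (core_sub_dom al e0_min), hcx]|].
    split; [apply (core_act al e0_min), hcx|reflexivity].
  - intros [[x [[hx _] [_ ->]]] hy]. split; [|exact hy]. exists x. auto.
Qed.

Section Expansion.
Variables (K : list S) (dl : R).
Hypothesis dl_pos : dl > 0.
Hypothesis expanding : forall F, core_finset F ->
  exists s, In s K /\ INR (length (boundary s F)) > dl * INR (length F).

Fixpoint words (p : nat) : list S :=
  match p with
  | O => [sone]
  | Datatypes.S q => flat_map (fun w => w :: map (fun s => smul s w) K) (words q)
  end.

Definition ball (p : nat) (F : list X) : list X :=
  nodup eqdec (flat_map (fun y => map (fun w => ract al w y) (words p)) F).

Lemma in_ball p F z : In z (ball p F) <-> exists y w, In y F /\ In w (words p) /\ z = ract al w y.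
Proof.
  unfold ball. rewrite nodup_In, in_flat_map. split.
  - intros [y [hy hz]]. apply in_map_iff in hz as [w [ez hw]]. exists y, w. auto.
  - intros [y [w [hy [hw ez]]]]. exists y. split; [exact hy|]. apply in_map_iff. exists w. auto.
Qed.

Lemma sone_in_words p : In sone (words p).
Proof.
  induction p; simpl; [left; reflexivity|].
  apply in_flat_map. exists sone. split; [exact IHp|left; reflexivity].
Qed.

Lemma incl_ball F p : incl F (ball p F).
Proof.
  intros y hy. apply in_ball. exists y, sone. split; [exact hy|].
  split; [apply sone_in_words|rewrite ract_one; reflexivity].
Qed.

Lemma ball_core_finset p F : core_finset F -> core_finset (ball p F).
Proof.
  intros [hn [hne hc]]. split; [apply NoDup_nodup|]. split.
  - destruct F as [|y F']; [congruence|]. intro h.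
    pose proof (incl_ball (y :: F') p y (or_introl eq_refl)) as hy. rewrite h in hy. exact hy.
  - intros z hz. apply in_ball in hz as [y [w [hy [_ ->]]]]. apply (core_act al e0_min), hc, hy.
Qed.

Lemma ball_succ_incl p F s : (forall x, In x F -> D al e0 x) -> In s K ->
  incl (ball p F ++ boundary s (ball p F)) (ball (Datatypes.S p) F).
Proof.
  intros hc hs z hz. apply in_app_iff in hz as [hz|hz].
  - apply in_ball in hz as [y [w [hy [hw ->]]]]. apply in_ball. exists y, w.
    repeat split; auto. simpl. apply in_flat_map. exists w. split; [exact hw|left; reflexivity].
  - unfold boundary in hz. apply in_filter_bdec in hz as [hz _]. apply in_map_iff in hz as [z' [<- hz']].
    apply in_ball in hz' as [y [w [hy [hw ->]]]]. apply in_ball. exists y, (smul s w).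
    split; [exact hy|]. split.
    + simpl. apply in_flat_map. exists w. split; [exact hw|right; apply in_map_iff; exists s; auto].
    + pose proof (core_act al e0_min w y (hc y hy)) as [hwy hcy].
      rewrite ract_mul; [reflexivity|]. apply rdom_mul. split; [exact hwy|apply (core_act al e0_min), hcy].
Qed.

Lemma ball_growth p F : core_finset F -> INR (length (ball p F)) >= (1 + INR p * dl) * INR (length F).
Proof.
  intro hF. induction p as [|p IH].
  - simpl INR. rewrite Rmult_0_l, Rplus_0_r, Rmult_1_l. apply Rle_ge, le_INR.
    apply NoDup_incl_length; [apply hF|apply incl_ball].
  - pose proof (ball_core_finset p F hF) as hB.
    destruct (expanding _ hB) as [s [hsK hs]].
    assert (hl : (length (ball p F) + length (boundary s (ball p F)) <= length (ball (Datatypes.S p) F))%nat).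
    { rewrite <- length_app. apply NoDup_incl_length; [|apply ball_succ_incl; [apply hF|exact hsK]].
      apply NoDup_app; [apply hB|apply boundary_NoDup, hB|].
      intros a ha hb. unfold boundary in hb. apply in_filter_bdec in hb. tauto. }
    apply le_INR in hl. rewrite plus_INR in hl. rewrite S_INR.
    pose proof (pos_INR (length F)). pose proof (pos_INR p).
    assert (h1 : INR (length (ball p F)) * (1 + dl) >= (1 + INR p * dl) * INR (length F) * (1 + dl))
      by (apply Rmult_ge_compat_r; lra).
    assert (h2 : 0 <= INR p * dl * dl * INR (length F))
      by (apply Rmult_le_pos; [apply Rmult_le_pos; [apply Rmult_le_pos|]|]; lra).
    lra.
Qed.

(* Once [p dl >= 1], the ball of radius [p] around any finite part of the core
   is at least twice as large; Hall's theorem then gives two disjoint copies of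
   the core inside it. *)
Lemma doubling_injection : exists p (psi : X * bool -> X),
  (forall v, D al e0 (fst v) -> In (psi v) (map (fun w => ract al w (fst v)) (words p))) /\
  (forall v w, D al e0 (fst v) -> D al e0 (fst w) -> psi v = psi w -> v = w).
Proof.
  destruct (INR_unbounded (/ dl)) as [p hp]. exists p.
  destruct (classic (exists x, D al e0 x)) as [[x0 _]|hempty].
  2: { exists fst. split; intros v; [|intros w]; intro hv; exfalso; apply hempty; eauto. }
  assert (hpd : INR p * dl >= 1).
  { apply Rle_ge. apply (Rmult_le_reg_r (/ dl)); [apply Rinv_0_lt_compat; lra|].
    rewrite Rmult_assoc, Rinv_r, Rmult_1_l, Rmult_1_r by lra. lra. }
  apply (infinite_hall x0). intros l hn hl. destruct l as [|v0 l0]; [simpl; lia|].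
  set (F := nodup eqdec (map fst (v0 :: l0))).
  assert (hF : core_finset F).
  { split; [apply NoDup_nodup|]. split.
    - intro h. assert (hin : In (fst v0) F) by (apply nodup_In, in_map; left; reflexivity).
      rewrite h in hin. exact hin.
    - intros x hx. apply nodup_In, in_map_iff in hx as [v [<- hv]]. apply hl, hv. }
  apply Nat.le_trans with (length (ball p F)).
  - assert (h2 : (length (v0 :: l0) <= length F * 2)%nat).
    { replace (length F * 2)%nat with (length (list_prod F [true; false])) by (rewrite length_prod; reflexivity).
      apply NoDup_incl_length; [exact hn|]. intros [a b] hab. apply in_prod_iff. split.
      - apply nodup_In, in_map_iff. exists (a, b). auto.
      - destruct b; simpl; auto. }
    apply INR_le. apply le_INR in h2. rewrite mult_INR in h2. simpl (INR 2) in h2.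
    pose proof (ball_growth p F hF). pose proof (pos_INR (length F)). nra.
  - apply length_le_nbhd; [apply NoDup_nodup|]. intros y hy. apply in_ball in hy as [y0 [w [hy0 [hw ->]]]].
    apply nodup_In, in_map_iff in hy0 as [v [<- hv]]. exists v. split; [exact hv|].
    apply in_map_iff. exists w. auto.
Qed.

End Expansion.

Lemma disj_union_img_core (w : nat -> S) (C : nat -> X -> Prop) k :
  (forall i, subset (C i) (D al e0)) ->
  (forall x, D al e0 x <-> exists i, (i < k)%nat /\ C i x) ->
  (forall i j, (i < k)%nat -> (j < k)%nat -> i <> j -> disjoint (C i) (C j)) ->
  disj_union_img al (D al e0) k (fun i => sstar (w i)) (fun i => img al (w i) (C i)).
Proof.
  intros hC hcov hdisj.
  assert (hback : forall i x, img al (sstar (w i)) (img al (w i) (C i)) x <-> C i x).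
  { intro i. apply img_sstar_img. intros x hx. apply (core_sub_dom al e0_min), (hC i), hx. }
  split.
  - intro x. rewrite hcov. split; intros [i [hi h]]; exists i; split; auto; apply hback; exact h.
  - intros i j hi hj ne x h1 h2. apply hback in h1, h2. exact (hdisj i j hi hj ne x h1 h2).
Qed.

(* Each point [y] of the core is split according to the first word [w_i]
   sending it to [psi (y, b)]; the two families of images are disjoint by
   injectivity of [psi]. *)
Lemma paradoxical_of_doubling (Wl : list S) (psi : X * bool -> X) :
  (forall v, D al e0 (fst v) -> In (psi v) (map (fun w => ract al w (fst v)) Wl)) ->
  (forall v w, D al e0 (fst v) -> D al e0 (fst w) -> psi v = psi w -> v = w) ->
  paradoxical al (D al e0).
Proof.
  intros hpsi hinj.
  set (k := length Wl). set (wi := fun i => nth i Wl sone).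
  set (hits := fun b y i => (i < k)%nat /\ psi (y, b) = ract al (wi i) y).
  set (piece := fun b i y => D al e0 y /\ hits b y i /\ forall i', hits b y i' -> (i <= i')%nat).
  assert (hcover : forall b y, D al e0 y <-> exists i, (i < k)%nat /\ piece b i y).
  { intros b y. split; [|intros [i [_ h]]; apply h]. intro hy.
    destruct (dec_inh_nat_subset_has_unique_least_element (hits b y) (fun i => classic _))
      as [i [[hi hmin] _]].
    - pose proof (hpsi (y, b) hy) as h. apply in_map_iff in h as [w [ew hw]].
      destruct (In_nth Wl w sone hw) as [i [hi ei]]. exists i. split; [exact hi|].
      unfold wi. rewrite ei. symmetry. exact ew.
    - exists i. split; [apply hi|]. split; [exact hy|]. auto. }
  assert (hpiece_disj : forall b i j y, piece b i y -> piece b j y -> i = j).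
  { intros b i j y [_ [hi mi]] [_ [hj mj]]. apply Nat.le_antisymm; auto. }
  set (copy := fun b i => img al (wi i) (piece b i)).
  assert (hcopy_core : forall b i, subset (copy b i) (D al e0)).
  { intros b i z [y [hy [_ ->]]]. apply (core_act al e0_min), hy. }
  assert (hcopy_disj : forall b b' i i' z, copy b i z -> copy b' i' z -> b = b' /\ i = i').
  { intros b b' i i' z [y [hy [_ ->]]] [y' [hy' [_ e]]].
    assert (e' : (y, b) = (y', b')).
    { apply hinj; [apply hy|apply hy'|]. rewrite (proj2 (proj1 (proj2 hy))), (proj2 (proj1 (proj2 hy'))).
      exact e. }
    injection e' as <- <-. split; [reflexivity|]. exact (hpiece_disj b i i' y hy hy'). }
  assert (hunion : forall b, disj_union_img al (D al e0) k (fun i => sstar (wi i)) (copy b)).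
  { intro b. apply disj_union_img_core.
    - intros i y hy. apply hy.
    - apply hcover.
    - intros i j _ _ ne y h1 h2. exact (ne (hpiece_disj b i j y h1 h2)). }
  assert (hdom : forall b i, subset (copy b i) (D al (smul (sstar (sstar (wi i))) (sstar (wi i)))))
    by (intros b i z hz; apply (core_sub_dom al e0_min), (hcopy_core b i), hz).
  exists k, k, (copy true), (copy false), (fun i => sstar (wi i)), (fun i => sstar (wi i)).
  refine (conj (fun i _ => hdom true i) (conj (fun j _ => hdom false j)
    (conj (hunion true) (conj (hunion false) (conj (fun i _ => hcopy_core true i)
    (conj (fun j _ => hcopy_core false j) (conj _ (conj _ _)))))))).
  - intros i i' _ _ ne z h1 h2. exact (ne (proj2 (hcopy_disj _ _ _ _ z h1 h2))).
  - intros i i' _ _ ne z h1 h2. exact (ne (proj2 (hcopy_disj _ _ _ _ z h1 h2))).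
  - intros i j _ _ z h1 h2. discriminate (proj1 (hcopy_disj _ _ _ _ z h1 h2)).
Qed.

Lemma not_paradoxical_almost_invariant : ~ paradoxical al (D al e0) ->
  forall K dl, dl > 0 -> exists F, core_finset F /\
    forall s, In s K -> INR (length (boundary s F)) <= dl * INR (length F).
Proof.
  intros hnp K dl hdl. apply NNPP. intro hno. apply hnp.
  destruct (doubling_injection K dl hdl) as [p [psi [h1 h2]]].
  - intros F hF. apply NNPP. intro hn. apply hno. exists F. split; [exact hF|].
    intros s hs. apply Rnot_gt_le. intro hgt. apply hn. eauto.
  - exact (paradoxical_of_doubling (words K p) psi h1 h2).
Qed.

End Paradox.

Lemma countable_exhaustion (T : Type) : countable T ->
  exists Kn : nat -> list T, forall t, exists N, forall n, (N <= n)%nat -> In t (Kn n).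
Proof.
  intros [f hf].
  destruct (choice (fun k (l : list T) => forall t, f t = k -> In t l)) as [pick hpick].
  { intro k. destruct (classic (exists t, f t = k)) as [[t ht]|hno].
    - exists [t]. intros t' ht'. left. apply hf. congruence.
    - exists []. intros t ht. exfalso. eauto. }
  exists (fun n => flat_map pick (seq 0 (Datatypes.S n))). intro t. exists (f t). intros n hn.
  apply in_flat_map. exists (f t). split; [apply in_seq; lia|]. apply hpick. reflexivity.
Qed.

Lemma Un_cv_squeeze_inv_succ (a : nat -> R) :
  (exists N, forall n, (N <= n)%nat -> 0 <= a n <= / INR (Datatypes.S n)) -> Un_cv a 0.
Proof.
  intros [N hN] eps heps. destruct (INR_unbounded (/ eps)) as [N0 hN0]. exists (max N N0).
  intros n hn. unfold R_dist. rewrite Rminus_0_r. destruct (hN n ltac:(lia)) as [h0 h1].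
  rewrite Rabs_pos_eq by exact h0. apply Rle_lt_trans with (/ INR (Datatypes.S n)); [exact h1|].
  rewrite <- (Rinv_inv eps). apply Rinv_lt_contravar.
  - apply Rmult_lt_0_compat; [apply Rinv_0_lt_compat; exact heps|apply lt_0_INR; lia].
  - apply Rlt_le_trans with (INR N0); [exact hN0|]. apply le_INR. lia.
Qed.

Lemma not_paradoxical_folner {S : InvSemigroup} {X : Type} (al : Rep S X) (e0 : S) :
  minimal_proj e0 -> countable S -> ~ paradoxical al (D al e0) -> domain_Folner al (D al e0).
Proof.
  intros e0_min hc hnp.
  destruct (countable_exhaustion S hc) as [Kn hKn].
  destruct (choice (fun n F => core_finset al (e0 := e0) F /\ forall s, In s (Kn n) ->
                     INR (length (boundary al s F)) <= / INR (Datatypes.S n) * INR (length F)))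
    as [F hF].
  { intro n. apply (not_paradoxical_almost_invariant al e0_min hnp).
    apply Rinv_0_lt_compat, lt_0_INR. lia. }
  exists F. split; [intro n; apply hF|]. split; [intro n; apply hF|].
  split; [intros n x hx; apply (proj2 (proj2 (proj1 (hF n)))), hx|].
  intro s. exists (fun n => length (boundary al s (F n))).
  split; [intro n; apply (card_boundary al e0_min), hF|].
  apply Un_cv_squeeze_inv_succ. destruct (hKn s) as [N hN]. exists N. intros n hn.
  destruct (hF n) as [hFn hb]. specialize (hb s (hN n hn)).
  pose proof (INR_pos_length _ (proj1 (proj2 hFn))) as hl.
  split.
  - unfold Rdiv. apply Rmult_le_pos; [apply pos_INR|left; apply Rinv_0_lt_compat; exact hl].
  - unfold Rdiv. apply (Rmult_le_reg_r (INR (length (F n)))); [exact hl|].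
    rewrite Rmult_assoc, Rinv_l by lra. lra.
Qed.

Theorem mainTheorem11 (S : InvSemigroup) (X : Type) (al : Rep S X) (e0 : S) :
  countable S -> minimal_proj e0 ->
  (amenable al <-> ~ paradoxical al (D al e0)) /\
  (~ paradoxical al (D al e0) <-> domain_Folner al (D al e0)).
Proof.
  intros hc e0_min.
  pose proof (amenable_not_paradoxical al e0 e0_min) as h1.
  pose proof (not_paradoxical_folner al e0 e0_min hc) as h2.
  pose proof (folner_amenable al e0_min) as h3.
  tauto.
Qed.
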